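(* Let $a,b\in\mathbb{R}$ and $\theta\in\mathbb{R}$ with $\cos\theta\ne0$. If $w\in\mathbb{C}\setminus\mathbb{R}$ is a zero of $f^*(\cdot,\theta)$ with $|w|<1$, then, setting $\zeta=1/w$ and $\tau=-\frac{1}{\zeta}-2\cos\theta$, we have $\zeta\tau^3\notin\mathbb{R}$.
   Context: $f^*(\zeta,\theta)=(\zeta+2\cos\theta)(2\zeta\cos\theta+1)+b\zeta-a(\zeta+2\cos\theta)^3$, viewed as a polynomial in complex $\zeta$. *)

From Stdlib Require Import Reals.
Open Scope R_scope.

Definition Cx := (R * R)%type.
Definition Re (z : Cx) : R := fst z.
Definition Im (z : Cx) : R := snd z.
Definition RtoC (x : R) : Cx := (x, 0).
Definition Cadd (z w : Cx) : Cx := (Re z + Re w, Im z + Im w).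
Definition Copp (z : Cx) : Cx := (- Re z, - Im z).
Definition Csub (z w : Cx) : Cx := Cadd z (Copp w).
Definition Cmul (z w : Cx) : Cx :=
  (Re z * Re w - Im z * Im w, Re z * Im w + Im z * Re w).
(* multiplicative inverse (z <> 0 intended) *)
Definition Cinv (z : Cx) : Cx :=
  (Re z / (Re z ^ 2 + Im z ^ 2), - Im z / (Re z ^ 2 + Im z ^ 2)).
Definition Cdiv (z w : Cx) : Cx := Cmul z (Cinv w).
Definition Cpow3 (z : Cx) : Cx := Cmul z (Cmul z z).
Definition Cmod (z : Cx) : R := sqrt (Re z ^ 2 + Im z ^ 2).

Definition fstar (a b theta : R) (z : Cx) : Cx :=
  let c := RtoC (2 * cos theta) in
  Csub (Cadd (Cmul (Cadd z c) (Cadd (Cmul c z) (RtoC 1))) (Cmul (RtoC b) z))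
       (Cmul (RtoC a) (Cpow3 (Cadd z c))).

(* Write c = 2 cos theta, so that tau = -(w + c) and
   zeta tau^3 = -(w + c)^3 conj(w) / |w|^2.  Since
   (w + c)(c w + 1) conj(w) = c w |w|^2 + (1 + c^2) |w|^2 + c conj(w),
   the imaginary part of f^*(w) conj(w) = 0 reads
     a Im((w + c)^3 conj w) = c Im(w) (|w|^2 - 1),
   whose right-hand side is nonzero for cos theta <> 0, w not real and |w| < 1. *)

From Stdlib Require Import Reals Lra Psatz.
Open Scope R_scope.

Definition Cconj (z : Cx) : Cx := (Re z, - Im z).

Definition Cnorm2 (z : Cx) : R := Re z ^ 2 + Im z ^ 2.

Lemma Cnorm2_pos (z : Cx) : Im z <> 0 -> 0 < Cnorm2 z.
Proof. destruct z as [x y]; unfold Cnorm2, Re, Im; simpl; intro; nra. Qed.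

Lemma Cnorm2_lt_1 (z : Cx) : Cmod z < 1 -> Cnorm2 z < 1.
Proof.
  unfold Cmod, Cnorm2; intro Hz.
  destruct (Rlt_le_dec (Re z ^ 2 + Im z ^ 2) 1) as [Hlt | Hge]; [exact Hlt |].
  apply sqrt_le_1_alt in Hge; rewrite sqrt_1 in Hge; lra.
Qed.

Lemma Cdiv1_Cinv (w : Cx) : Cnorm2 w <> 0 -> Cdiv (RtoC 1) (Cinv w) = w.
Proof.
  destruct w as [x y]; unfold Cnorm2, Cdiv, Cinv, Cmul, RtoC, Re, Im; cbn [fst snd]; intro Hn.
  assert (Hinv : (x / (x ^ 2 + y ^ 2)) ^ 2 + (- y / (x ^ 2 + y ^ 2)) ^ 2
                 = / (x ^ 2 + y ^ 2)) by (field; lra).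
  rewrite Hinv.
  assert (/ (x ^ 2 + y ^ 2) <> 0) by (apply Rinv_neq_0_compat; lra).
  f_equal; field; lra.
Qed.

Lemma Im_Cinv_mul_pow3_opp (c : R) (w : Cx) :
  Cnorm2 w <> 0 ->
  Im (Cmul (Cinv w) (Cpow3 (Csub (Copp w) (RtoC c))))
  = - Im (Cmul (Cpow3 (Cadd w (RtoC c))) (Cconj w)) / Cnorm2 w.
Proof.
  destruct w as [x y].
  unfold Cnorm2, Cconj, Cinv, Cpow3, Csub, Cadd, Copp, Cmul, RtoC, Re, Im; simpl; intro Hn.
  field; lra.
Qed.

(* The b-term drops out because b w conj(w) = b |w|^2 is real. *)
Lemma Im_fstar_mul_conj (a b theta : R) (w : Cx) :
  Im (Cmul (fstar a b theta w) (Cconj w))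
  = 2 * cos theta * Im w * (Cnorm2 w - 1)
    - a * Im (Cmul (Cpow3 (Cadd w (RtoC (2 * cos theta)))) (Cconj w)).
Proof.
  destruct w as [x y].
  unfold fstar, Cnorm2, Cconj, Cpow3, Csub, Cadd, Copp, Cmul, RtoC, Re, Im; simpl.
  ring.
Qed.

Theorem mainTheorem20 (a b theta : R) (w : Cx) :
  cos theta <> 0 ->
  Im w <> 0 ->
  fstar a b theta w = RtoC 0 ->
  Cmod w < 1 ->
  let zeta := Cinv w in
  let tau := Csub (Copp (Cdiv (RtoC 1) zeta)) (RtoC (2 * cos theta)) in
  Im (Cmul zeta (Cpow3 tau)) <> 0.
Proof.
  intros Hcos Hw Hroot Hmod zeta tau; subst zeta tau.
  pose proof (Cnorm2_pos w Hw) as Hpos.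
  pose proof (Cnorm2_lt_1 w Hmod) as Hlt1.
  assert (Hn : Cnorm2 w <> 0) by lra.
  rewrite (Cdiv1_Cinv w Hn), (Im_Cinv_mul_pow3_opp _ w Hn).
  intro Hzero.
  assert (Hcube : Im (Cmul (Cpow3 (Cadd w (RtoC (2 * cos theta)))) (Cconj w)) = 0).
  { apply (Rmult_eq_reg_r (- / Cnorm2 w)).
    - rewrite Rmult_0_l, <- Hzero; field; exact Hn.
    - apply Ropp_neq_0_compat, Rinv_neq_0_compat; exact Hn. }
  pose proof (Im_fstar_mul_conj a b theta w) as Hid.
  rewrite Hroot, Hcube, Rmult_0_r, Rminus_0_r in Hid.
  assert (Hprod : 2 * cos theta * Im w * (Cnorm2 w - 1) <> 0).
  { repeat apply Rmult_integral_contrapositive_currified; lra. }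
  apply Hprod; rewrite <- Hid; unfold Cmul, RtoC, Re, Im; simpl; ring.
Qed.
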